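(* Let $\mathfrak{g}$ be a direct product of finitely many Lie algebras of the form $\operatorname{Lie}(\operatorname{Isom}M)$ with $M = S^k$, $\mathbb{E}^k$, or $\mathbb{H}^k$ (the $k$ and the type of $M$ may vary between factors). Then $\mathfrak{g}$ contains no nonabelian nilpotent subalgebra.
   Context: $\operatorname{Lie}(\operatorname{Isom}M)$ is the Lie algebra of the isometry group of $M$: $\mathfrak{so}_{k+1}$ for $S^k$, $\mathbb{R}^k\rtimes\mathfrak{so}_k$ for $\mathbb{E}^k$, and $\mathfrak{so}_{1,k}$ for $\mathbb{H}^k$. *)

From HB Require Import structures.
From mathcomp Require Import all_boot all_order all_algebra.
From mathcomp Require Import reals.
Set Implicit Arguments. Unset Strict Implicit. Unset Printing Implicit Defensive.
Import Order.TTheory GRing.Theory Num.Theory.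
Local Open Scope ring_scope.

Inductive geom := Sph | Euc | Hyp.

Definition minkJ (R : realType) (k : nat) : 'M[R]_k.+1 :=
  \matrix_(i, j) (if i == j then (if i == ord0 then -1 else 1) else 0).

(* Lie(Isom M) as a Lie subalgebra of gl_(k+1)(R):
   - S^k : so_(k+1)      = skew-symmetric (k+1)x(k+1) matrices;
   - H^k : so_(1,k)      = { A | A^T J + J A = 0 }, J = diag(-1,1,..,1);
   - E^k : R^k x| so_k   = affine matrices [[0, 0], [v, B]] with B skew
             (acting on (1, x) as x |-> v + B x). *)
Definition in_isom_lie (R : realType) (t : geom) (k : nat) (A : 'M[R]_k.+1) : Prop :=
  match t with
  | Sph => A^T = - A
  | Hyp => A^T *m minkJ R k + minkJ R k *m A = 0
  | Euc => exists (B : 'M[R]_k) (v : 'cV[R]_k),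
             B^T = - B /\ A = block_mx (0 : 'M[R]_(1,1)) (0 : 'M[R]_(1,k)) v B
  end.

Section ProductLie.
Variables (R : realType) (m : nat) (t : 'I_m -> geom) (k : 'I_m -> nat).

Definition pelt := forall i : 'I_m, 'M[R]_((k i).+1).

Definition in_g (x : pelt) : Prop := forall i, in_isom_lie (t i) (x i).

Definition pzero : pelt := fun i => 0.
Definition padd (x y : pelt) : pelt := fun i => x i + y i.
Definition pscale (a : R) (x : pelt) : pelt := fun i => a *: x i.
Definition pbr (x y : pelt) : pelt := fun i => x i *m y i - y i *m x i.
Definition is_pzero (x : pelt) : Prop := forall i, x i = 0.

Definition is_subalgebra (S : pelt -> Prop) : Prop :=
  [/\ forall x, S x -> in_g x,
      S pzero,
      forall x y, S x -> S y -> S (padd x y),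
      forall a x, S x -> S (pscale a x) &
      forall x y, S x -> S y -> S (pbr x y)].

Inductive span (A : pelt -> Prop) : pelt -> Prop :=
  | span_gen x : A x -> span A x
  | span_zero : span A pzero
  | span_add x y : span A x -> span A y -> span A (padd x y)
  | span_scale a x : span A x -> span A (pscale a x).

Fixpoint lcs (S : pelt -> Prop) (n : nat) : pelt -> Prop :=
  match n with
  | O => S
  | n'.+1 => span (fun z => exists x y, S x /\ lcs S n' y /\ z = pbr x y)
  end.

Definition nilpotent (S : pelt -> Prop) : Prop :=
  exists n, forall x, lcs S n x -> is_pzero x.

Definition abelian (S : pelt -> Prop) : Prop :=
  forall x y, S x -> S y -> is_pzero (pbr x y).

End ProductLie.

(* It suffices to show that no factor contains a Heisenberg triple: if A and B
   commute with C = [A, B], then C = 0.  Indeed, if S is nilpotent with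
   lower central series S = S^0 >= S^1 >= ... >= S^N = 0, then descending
   induction gives [S, S^j] = 0 for every j: for x in S and y in S^j,
   z = [x, y] lies in S^(j+1), so x, y, z form a Heisenberg triple in each
   factor.

   In so_(k+1), tr (C^T C) = - tr (C [A, B]) = 0 because C commutes with A.
   In the Euclidean algebra this applies to the rotation parts, after which
   C is a translation v with A v = B v = 0, and |v|^2 = 0 by skewness.
   In so_(1,k), with timelike axis e, powers of C commuting with A give
   tr C^2 = tr C^4 = 0.  A Cauchy-Schwarz inequality for the column norms of
   C + t C^3 then forces W = C^2 to be either killed by e (and C is an
   ordinary skew matrix) or of rank one, W = W e e^T W / w with
   w = <C e, C e> > 0.  In the second case W e is a nonzero null vector
   orthogonal to A e and to the null vector C B e, hence
   w = 2 <A e, C B e> = 0, a contradiction. *)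

From HB Require Import structures.
From mathcomp Require Import all_boot all_order all_algebra.
From mathcomp Require Import reals.
From mathcomp Require Import ring lra.
Set Implicit Arguments. Unset Strict Implicit. Unset Printing Implicit Defensive.
Import Order.TTheory GRing.Theory Num.Theory.
Local Open Scope ring_scope.

Local Notation lie A B := (A *m B - B *m A).

Lemma mxtrace_mul_lie (R : comPzRingType) n (M A B : 'M[R]_n) :
  comm_mx M A -> \tr (M *m lie A B) = 0.
Proof.
move=> MA; rewrite mulmxBr linearB /= mulmxA MA -mulmxA.
by rewrite (mulmxA M B A) (mxtrace_mulC (M *m B) A) subrr.
Qed.

Lemma mxtrace_trmx_mul (R : pzSemiRingType) m n (X : 'M[R]_(m, n)) :
  \tr (X^T *m X) = \sum_i \sum_j X j i ^+ 2.
Proof.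
apply: eq_bigr => i _; rewrite mxE; apply: eq_bigr => j _.
by rewrite mxE expr2.
Qed.

Lemma mxtrace_trmx_mul_ge0 (R : realDomainType) m n (X : 'M[R]_(m, n)) :
  0 <= \tr (X^T *m X).
Proof.
rewrite mxtrace_trmx_mul; apply: sumr_ge0 => i _; apply: sumr_ge0 => j _.
exact: sqr_ge0.
Qed.

Lemma mxtrace_trmx_mul_eq0 (R : realDomainType) m n (X : 'M[R]_(m, n)) :
  \tr (X^T *m X) = 0 -> X = 0.
Proof.
have sum_sqr_ge0 (F : 'I_m -> R) : 0 <= \sum_j F j ^+ 2.
  by apply: sumr_ge0 => j _; exact: sqr_ge0.
rewrite mxtrace_trmx_mul => /psumr_eq0P col0; apply/matrixP => j i; rewrite mxE.
have /psumr_eq0P entry0 := col0 (fun _ _ => sum_sqr_ge0 _) i isT.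
by apply/eqP; rewrite -sqrf_eq0 entry0 // => *; exact: sqr_ge0.
Qed.

Lemma skew_lie_eq0 (R : realDomainType) n (A B : 'M[R]_n) :
  A^T = - A -> B^T = - B -> comm_mx A (lie A B) -> lie A B = 0.
Proof.
move=> A_skew B_skew AC; apply: mxtrace_trmx_mul_eq0.
have -> : (lie A B)^T = - lie A B.
  by rewrite linearB /= !trmx_mul A_skew B_skew !mulNmx !mulmxN !opprK opprB.
by rewrite mulNmx linearN /= mxtrace_mul_lie ?oppr0 //; exact: comm_mx_sym.
Qed.

Lemma quadratic_ge0_discr (R : realFieldType) (a b c : R) :
  (forall t, 0 <= a + 2 * b * t + c * t ^+ 2) -> b ^+ 2 <= a * c.
Proof.
move=> q_ge0; have a_ge0 : 0 <= a by have := q_ge0 0; rewrite !mulr0 expr0n /= mulr0 !addr0.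
have c_ge0 : 0 <= c.
  rewrite leNgt; apply/negP => c_lt0.
  have t_ge1 : 1 <= (a + 1) / - c + 1 by rewrite lerDr divr_ge0 // ?oppr_ge0; lra.
  have ct : c * ((a + 1) / - c) = - (a + 1) by rewrite mulrC invrN mulrN mulNr divfK ?lt_eqF.
  have := q_ge0 ((a + 1) / - c + 1); have := q_ge0 (- ((a + 1) / - c + 1)).
  move: t_ge1 ct; set s := (a + 1) / - c; nra.
have [c_gt0|c0] := ltP 0 c.
  have := q_ge0 (- b / c); have cb : c * (- b / c) = - b by rewrite mulrC divfK ?gt_eqF.
  move: cb; set t := - b / c; nra.
have c_eq0 : c = 0 by apply/eqP; rewrite eq_le c0 c_ge0.
subst c; rewrite mulr0.
have [b0|b_neq0] := eqVneq b 0; first by rewrite b0 expr0n.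
have := q_ge0 (- (a + 1) / (2 * b)).
have bt : 2 * b * (- (a + 1) / (2 * b)) = - (a + 1) by rewrite mulrC divfK // mulf_neq0 ?pnatr_eq0.
by rewrite bt mul0r addr0; lra.
Qed.

Lemma lie_affine (R : pzRingType) k (v w : 'cV[R]_k) (B D : 'M[R]_k) :
  lie (block_mx (0 : 'M_1) 0 v B) (block_mx (0 : 'M_1) 0 w D) =
  block_mx 0 0 (B *m w - D *m v) (lie B D).
Proof.
by rewrite !mulmx_block !(mulmx0, mul0mx, addr0, add0r) opp_block_mx add_block_mx !subrr.
Qed.

Section AffineHeisenberg.
Context {R : realDomainType} {k : nat} (v w : 'cV[R]_k) (B D : 'M[R]_k).
Hypotheses (B_skew : B^T = - B) (D_skew : D^T = - D).
Local Notation A1 := (block_mx (0 : 'M_1) 0 v B).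
Local Notation A2 := (block_mx (0 : 'M_1) 0 w D).

Lemma affine_lie_eq0 : comm_mx A1 (lie A1 A2) -> comm_mx A2 (lie A1 A2) -> lie A1 A2 = 0.
Proof.
rewrite lie_affine; set c := B *m w - D *m v => comm1 comm2.
rewrite /comm_mx !mulmx_block !(mulmx0, mul0mx, addr0, add0r) in comm1 comm2.
have [_ _ Bc BK] := eq_block_mx comm1; have [_ _ Dc _] := eq_block_mx comm2.
have K0 : lie B D = 0 by apply: skew_lie_eq0.
rewrite K0 mul0mx in Bc; rewrite K0 mul0mx in Dc; rewrite K0.
have cB : c^T *m B = 0.
  by rewrite -(trmxK B) -trmx_mul B_skew mulNmx Bc linearN /= linear0 oppr0.
have cD : c^T *m D = 0.
  by rewrite -(trmxK D) -trmx_mul D_skew mulNmx Dc linearN /= linear0 oppr0.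
suff -> : c = 0 by rewrite block_mx0.
apply: mxtrace_trmx_mul_eq0.
by rewrite {2}/c mulmxBr !mulmxA cB cD !mul0mx subrr linear0.
Qed.

End AffineHeisenberg.

Section Lorentz.
Context {R : realFieldType} {n : nat} (i0 : 'I_n).
Local Notation E := (delta_mx i0 i0 : 'M[R]_n).

Lemma delta_mulmxE (M : 'M[R]_n) i j : (E *m M) i j = (i == i0)%:R * M i0 j.
Proof.
rewrite mxE (bigD1 i0) //= big1 => [|l l_neq]; first by rewrite mxE eqxx andbT addr0.
by rewrite mxE (negbTE l_neq) andbF mul0r.
Qed.

Lemma mulmx_deltaE (M : 'M[R]_n) i j : (M *m E) i j = M i i0 * (j == i0)%:R.
Proof.
rewrite mxE (bigD1 i0) //= big1 => [|l l_neq]; first by rewrite mxE eqxx addr0.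
by rewrite mxE (negbTE l_neq) mulr0.
Qed.

Lemma delta_conj (M : 'M[R]_n) : E *m M *m E = M i0 i0 *: E.
Proof.
apply/matrixP => i j; rewrite mulmx_deltaE delta_mulmxE !mxE.
by case: (i == i0); case: (j == i0); rewrite /= ?(mulr1, mul1r, mulr0, mul0r).
Qed.

Lemma mxtrace_delta_mul (M : 'M[R]_n) : \tr (E *m M) = M i0 i0.
Proof.
rewrite /mxtrace (bigD1 i0) //= big1 => [|l l_neq].
  by rewrite delta_mulmxE eqxx mul1r addr0.
by rewrite delta_mulmxE (negbTE l_neq) mul0r.
Qed.

Lemma mxtrace_mul_delta_mul (X Y : 'M[R]_n) : \tr (X *m E *m Y) = (Y *m X) i0 i0.
Proof. by rewrite mxtrace_mulC mulmxA -mxtrace_delta_mul mxtrace_mulC. Qed.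

Lemma mul_delta_mul_entry (X Y : 'M[R]_n) : (X *m E *m Y) i0 i0 = X i0 i0 * Y i0 i0.
Proof.
rewrite mxE (bigD1 i0) //= big1 => [|l l_neq].
  by rewrite mulmx_deltaE eqxx mulr1 addr0.
by rewrite mulmx_deltaE (negbTE l_neq) mulr0 mul0r.
Qed.

Lemma mxtrace_col_norm (V : 'M[R]_n) : \tr ((V *m E)^T *m (V *m E)) = (V^T *m V) i0 i0.
Proof.
rewrite trmx_mul trmx_delta mxtrace_mulC -!mulmxA (mulmxA E E) mul_delta_mx.
by rewrite mxtrace_mulC -mulmxA mxtrace_delta_mul.
Qed.

Fact lorentz_mx_key : unit. Proof. by []. Qed.
Definition lorentz_mx : 'M[R]_n := locked_with lorentz_mx_key (1%:M - 2 *: E).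
Local Notation J := lorentz_mx.
Lemma lorentz_mxE : J = 1%:M - 2 *: E. Proof. exact: unlock. Qed.

Lemma lorentz_mxT : J^T = J.
Proof. by rewrite lorentz_mxE linearB linearZ /= trmx1 trmx_delta. Qed.

Lemma lorentz_mx_mul_delta : J *m E = - E.
Proof.
rewrite lorentz_mxE mulmxBl mul1mx -scalemxAl mul_delta_mx scaler_nat mulr2n.
by rewrite opprD addrA subrr sub0r.
Qed.

Lemma delta_mul_lorentz_mx : E *m J = - E.
Proof.
rewrite lorentz_mxE mulmxBr mulmx1 -scalemxAr mul_delta_mx scaler_nat mulr2n.
by rewrite opprD addrA subrr sub0r.
Qed.

Lemma lorentz_mx_invol : J *m J = 1%:M.
Proof.
rewrite {1}lorentz_mxE mulmxBl mul1mx -scalemxAl delta_mul_lorentz_mx.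
by rewrite scalerN opprK lorentz_mxE subrK.
Qed.

Lemma lorentz_mx_mul_entry (X : 'M[R]_n) : (J *m X) i0 i0 = - X i0 i0.
Proof.
rewrite lorentz_mxE mulmxBl mul1mx -scalemxAl [(_ - _ : 'M_n) _ _]mxE [(- _ : 'M_n) _ _]mxE.
rewrite [(_ *: _ : 'M_n) _ _]mxE delta_mulmxE eqxx mul1r; lra.
Qed.

Lemma mul_lorentz_mx_entry (X : 'M[R]_n) : (X *m J) i0 i0 = - X i0 i0.
Proof.
rewrite lorentz_mxE mulmxBr mulmx1 -scalemxAr [(_ - _ : 'M_n) _ _]mxE [(- _ : 'M_n) _ _]mxE.
rewrite [(_ *: _ : 'M_n) _ _]mxE mulmx_deltaE eqxx mulr1; lra.
Qed.

Lemma lorentz_conj_entry (X : 'M[R]_n) : (J *m X *m J) i0 i0 = X i0 i0.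
Proof. by rewrite mul_lorentz_mx_entry lorentz_mx_mul_entry opprK. Qed.

Lemma lorentz_conj_mul (X Y : 'M[R]_n) :
  (J *m X *m J) *m (J *m Y *m J) = J *m (X *m Y) *m J.
Proof. by rewrite !mulmxA -(mulmxA _ J J) lorentz_mx_invol mulmx1 -!mulmxA. Qed.

Lemma lorentz_bilinear_entry (X Y : 'M[R]_n) :
  (X *m J *m Y) i0 i0 = (X *m Y) i0 i0 - 2 * (X i0 i0 * Y i0 i0).
Proof.
rewrite -mul_delta_mul_entry lorentz_mxE mulmxBr mulmx1 -scalemxAr mulmxBl -scalemxAl.
by rewrite [(_ - _ : 'M_n) _ _]mxE [(- _ : 'M_n) _ _]mxE [(_ *: _ : 'M_n) _ _]mxE.
Qed.

Definition lorentz_skew (X : 'M[R]_n) := X^T = - (J *m X *m J).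

Lemma lorentz_skew_of_form (X : 'M[R]_n) : X^T *m J + J *m X = 0 -> lorentz_skew X.
Proof.
move=> /eqP; rewrite addr_eq0 => /eqP XJ.
by rewrite /lorentz_skew -[X^T]mulmx1 -lorentz_mx_invol mulmxA XJ mulNmx.
Qed.

Lemma lorentz_skew_trmxJ (X : 'M[R]_n) : lorentz_skew X -> X^T *m J = - (J *m X).
Proof. by move->; rewrite mulNmx -(mulmxA _ J J) lorentz_mx_invol mulmx1. Qed.

Lemma lorentz_skew_entry (X : 'M[R]_n) : lorentz_skew X -> X i0 i0 = 0.
Proof.
move=> X_skew; have : X^T i0 i0 = X i0 i0 by rewrite mxE.
rewrite X_skew [(- _ : 'M_n) _ _]mxE lorentz_conj_entry; lra.
Qed.

Lemma lorentz_skewD (X Y : 'M[R]_n) :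
  lorentz_skew X -> lorentz_skew Y -> lorentz_skew (X + Y).
Proof.
move=> X_skew Y_skew; rewrite /lorentz_skew linearD /= X_skew Y_skew.
by rewrite mulmxDr mulmxDl opprD.
Qed.

Lemma lorentz_skewZ a (X : 'M[R]_n) : lorentz_skew X -> lorentz_skew (a *: X).
Proof.
move=> X_skew; rewrite /lorentz_skew linearZ /= X_skew.
by rewrite -scalemxAr -scalemxAl scalerN.
Qed.

Lemma lorentz_skew_lie (A B : 'M[R]_n) :
  lorentz_skew A -> lorentz_skew B -> lorentz_skew (lie A B).
Proof.
move=> A_skew B_skew; rewrite /lorentz_skew linearB /= !trmx_mul A_skew B_skew.
by rewrite !mulNmx !mulmxN !opprK !lorentz_conj_mul mulmxBr mulmxBl opprB.
Qed.

Lemma lorentz_skew_cube (X : 'M[R]_n) : lorentz_skew X -> lorentz_skew (X *m X *m X).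
Proof.
move=> X_skew; rewrite /lorentz_skew !trmx_mul X_skew.
by rewrite !mulNmx !mulmxN !opprK !lorentz_conj_mul (mulmxA X X X).
Qed.

Lemma lorentz_skew_sqrT (X : 'M[R]_n) : lorentz_skew X -> (X *m X)^T = J *m (X *m X) *m J.
Proof. by move=> X_skew; rewrite trmx_mul X_skew mulNmx mulmxN opprK lorentz_conj_mul. Qed.

Lemma lorentz_skew_col_norm (X : 'M[R]_n) :
  lorentz_skew X -> (X^T *m X) i0 i0 = (X *m X) i0 i0.
Proof.
move=> X_skew; rewrite X_skew mulNmx [(- _ : 'M_n) _ _]mxE -!mulmxA lorentz_mx_mul_entry opprK.
by rewrite mulmxA lorentz_bilinear_entry (lorentz_skew_entry X_skew) mulr0 mulr0 subr0.
Qed.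

Lemma lorentz_skew_sqr_entry_ge0 (X : 'M[R]_n) : lorentz_skew X -> 0 <= (X *m X) i0 i0.
Proof.
move=> X_skew; rewrite -lorentz_skew_col_norm // -mxtrace_col_norm.
exact: mxtrace_trmx_mul_ge0.
Qed.

Definition minkowski (X Y : 'M[R]_n) := (X^T *m J *m Y) i0 i0.

Lemma minkowskiC (X Y : 'M[R]_n) : minkowski X Y = minkowski Y X.
Proof.
have entryT (M : 'M[R]_n) : M i0 i0 = M^T i0 i0 by rewrite mxE.
by rewrite /minkowski [RHS]entryT !trmx_mul trmxK lorentz_mxT mulmxA.
Qed.

Lemma minkowskiDl (X1 X2 Y : 'M[R]_n) :
  minkowski (X1 + X2) Y = minkowski X1 Y + minkowski X2 Y.
Proof. by rewrite /minkowski linearD /= !mulmxDl [(_ + _ : 'M_n) _ _]mxE. Qed.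

Lemma minkowskiZl a (X Y : 'M[R]_n) : minkowski (a *: X) Y = a * minkowski X Y.
Proof. by rewrite /minkowski linearZ /= -!scalemxAl [(_ *: _ : 'M_n) _ _]mxE. Qed.

Lemma minkowskiDr (X Y1 Y2 : 'M[R]_n) :
  minkowski X (Y1 + Y2) = minkowski X Y1 + minkowski X Y2.
Proof. by rewrite minkowskiC minkowskiDl !(minkowskiC _ X). Qed.

Lemma minkowskiZr a (X Y : 'M[R]_n) : minkowski X (a *: Y) = a * minkowski X Y.
Proof. by rewrite minkowskiC minkowskiZl minkowskiC. Qed.

Lemma minkowski_skewl (X Y : 'M[R]_n) : lorentz_skew X -> minkowski X Y = (X *m Y) i0 i0.
Proof.
move=> X_skew; rewrite /minkowski lorentz_skew_trmxJ // mulNmx -mulmxA.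
by rewrite [(- _ : 'M_n) _ _]mxE lorentz_mx_mul_entry opprK.
Qed.

Lemma minkowski_skew_mull (X Y Z : 'M[R]_n) :
  lorentz_skew X -> minkowski (X *m Y) Z = - minkowski Y (X *m Z).
Proof.
move=> X_skew; rewrite /minkowski trmx_mul -(mulmxA Y^T X^T) lorentz_skew_trmxJ //.
by rewrite mulmxN mulNmx [(- _ : 'M_n) _ _]mxE !mulmxA.
Qed.

Lemma minkowski_ge0 (V : 'M[R]_n) : V i0 i0 = 0 -> 0 <= minkowski V V.
Proof.
move=> V0; rewrite /minkowski lorentz_bilinear_entry V0 !mulr0 subr0 -mxtrace_col_norm.
exact: mxtrace_trmx_mul_ge0.
Qed.

Lemma minkowski_null_orth_ge0 (W V : 'M[R]_n) :
  W i0 i0 != 0 -> minkowski W W = 0 -> minkowski V W = 0 -> 0 <= minkowski V V.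
Proof.
(* V - a W has no timelike component, and the same Minkowski norm as V. *)
move=> W0 WW VW; set a := V i0 i0 / W i0 i0.
have V'0 : (V + (- a) *: W) i0 i0 = 0.
  by rewrite [(_ + _ : 'M_n) _ _]mxE [(_ *: _ : 'M_n) _ _]mxE /a mulNr divfK // subrr.
have := minkowski_ge0 V'0.
by rewrite !minkowskiDl !minkowskiDr !minkowskiZl !minkowskiZr WW VW minkowskiC VW !mulr0 !addr0.
Qed.

Lemma minkowski_null_orth_eq0 (W U V : 'M[R]_n) :
  W i0 i0 != 0 -> minkowski W W = 0 -> minkowski U W = 0 -> minkowski V W = 0 ->
  minkowski V V = 0 -> minkowski U V = 0.
Proof.
move=> W0 WW UW VW VV; apply/eqP; rewrite -sqrf_eq0 eq_le sqr_ge0 andbT.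
rewrite -(mulr0 (minkowski U U)); apply: quadratic_ge0_discr => t.
have UVW : minkowski (U + t *: V) W = 0 by rewrite minkowskiDl minkowskiZl UW VW mulr0 addr0.
have := minkowski_null_orth_ge0 W0 WW UVW.
rewrite !minkowskiDl !minkowskiDr !minkowskiZl !minkowskiZr VV (minkowskiC V U); nra.
Qed.

Section LorentzRankOneDefect.
Variable W : 'M[R]_n.
Local Notation G := (W i0 i0 *: W - W *m E *m W).

Lemma delta_mul_defect : E *m G = 0.
Proof. by rewrite mulmxBr -scalemxAr !mulmxA delta_conj -scalemxAl subrr. Qed.

Lemma defect_mul_delta : G *m E = 0.
Proof. by rewrite mulmxBl -scalemxAl -!mulmxA (mulmxA E) delta_conj -scalemxAr subrr. Qed.

Lemma mxtrace_defect_sqr : \tr (W *m W) = 0 ->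
  \tr (G *m G) = (W *m W) i0 i0 ^+ 2 - 2 * W i0 i0 * (W *m W *m W) i0 i0.
Proof.
move=> trW2; rewrite mulmxBl !mulmxBr -!scalemxAl -!scalemxAr scalerA !linearB /= !mxtraceZ.
have -> : W *m (W *m E *m W) = W *m W *m E *m W by rewrite !mulmxA.
have -> : W *m E *m W *m W = W *m E *m (W *m W) by rewrite !mulmxA.
have -> : W *m E *m W *m (W *m E *m W) = W *m E *m W *m W *m E *m W by rewrite !mulmxA.
rewrite trW2 !mxtrace_mul_delta_mul.
have -> : W *m (W *m E *m W *m W) = W *m W *m E *m (W *m W) by rewrite !mulmxA.
rewrite mul_delta_mul_entry (mulmxA W W W); ring.
Qed.

Hypothesis W_sym : W^T = J *m W *m J.

Lemma lorentz_defectT : G^T = G.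
Proof.
have JG : J *m G = G.
  by rewrite lorentz_mxE mulmxBl mul1mx -scalemxAl delta_mul_defect scaler0 subr0.
have GJ : G *m J = G.
  by rewrite lorentz_mxE mulmxBr mulmx1 -scalemxAr defect_mul_delta scaler0 subr0.
transitivity (J *m G *m J); last by rewrite JG GJ.
rewrite linearB linearZ /= !trmx_mul W_sym trmx_delta mulmxBr mulmxBl.
congr (_ - _); first by rewrite -scalemxAr -scalemxAl.
have JEJ : J *m E *m J = E by rewrite lorentz_mx_mul_delta mulNmx delta_mul_lorentz_mx opprK.
by rewrite !mulmxA -(mulmxA (J *m W) J E) -(mulmxA (J *m W) (J *m E) J) JEJ.
Qed.

Lemma lorentz_comm_rank1 (M : 'M[R]_n) : lorentz_skew M -> comm_mx M W ->
  W i0 i0 *: W = W *m E *m W -> W i0 i0 != 0 -> M *m W *m E = 0.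
Proof.
move=> M_skew MW rank1 W0.
(* (M W)^T = - J (M W) J kills the diagonal entry, and w (M W e) = (M W)_00 W e. *)
have MW0 : (M *m W) i0 i0 = 0.
  have : (M *m W)^T i0 i0 = (M *m W) i0 i0 by rewrite mxE.
  rewrite trmx_mul W_sym M_skew mulmxN lorentz_conj_mul [(- _ : 'M_n) _ _]mxE.
  rewrite lorentz_conj_entry -MW; lra.
have M_WEW : M *m (W *m E *m W) = W *m E *m W *m M.
  by rewrite -rank1 -scalemxAr -scalemxAl MW.
have : W i0 i0 *: (M *m W *m E) = 0.
  rewrite scalemxAl scalemxAr rank1 M_WEW -!mulmxA (mulmxA W M E) (mulmxA E).
  by rewrite delta_conj -MW MW0 scale0r mulmx0.
by move/eqP; rewrite scaler_eq0 (negbTE W0) => /eqP.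
Qed.

End LorentzRankOneDefect.

Section LorentzSquare.
Variable C : 'M[R]_n.
Hypothesis C_skew : lorentz_skew C.
Local Notation W := (C *m C).

Lemma lorentz_cauchy_schwarz : (W *m W) i0 i0 ^+ 2 <= W i0 i0 * (W *m W *m W) i0 i0.
Proof.
apply: quadratic_ge0_discr => t.
have N_skew : lorentz_skew (C + t *: (C *m C *m C)).
  by apply: lorentz_skewD => //; apply/lorentz_skewZ/lorentz_skew_cube.
have := lorentz_skew_sqr_entry_ge0 N_skew.
rewrite mulmxDl !mulmxDr -!scalemxAl -!scalemxAr scalerA.
rewrite ![(_ + _ : 'M_n) _ _]mxE ![(_ *: _ : 'M_n) _ _]mxE !mulmxA; nra.
Qed.

Lemma lorentz_skew_eq0 : W i0 i0 = 0 -> \tr W = 0 -> C = 0.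
Proof.
move=> W0 trW.
have CE : C *m E = 0.
  by apply: mxtrace_trmx_mul_eq0; rewrite mxtrace_col_norm lorentz_skew_col_norm.
have EC : E *m C = 0.
  apply: trmx_inj; rewrite trmx_mul trmx_delta C_skew mulNmx -(mulmxA _ J E).
  by rewrite lorentz_mx_mul_delta mulmxN -mulmxA CE mulmx0 !oppr0 linear0.
have C_skewsym : C^T = - C.
  rewrite C_skew lorentz_mxE !mulmxBr !mulmxBl !mulmx1 !mul1mx.
  by rewrite -!scalemxAr -!scalemxAl CE EC !mul0mx !scaler0 !subr0.
by apply: mxtrace_trmx_mul_eq0; rewrite C_skewsym mulNmx linearN /= trW oppr0.
Qed.

Lemma lorentz_sqr_rank1 : \tr (W *m W) = 0 ->
  (W *m W) i0 i0 = 0 /\ W i0 i0 *: W = W *m E *m W.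
Proof.
(* G = w W - W e e^T W (w = W_00) is symmetric, and by Cauchy-Schwarz
   0 <= tr (G G) = (W^2)_00^2 - 2 w (W^3)_00 <= - (W^2)_00^2. *)
move=> trW2; have cs := lorentz_cauchy_schwarz.
have W_ge0 := lorentz_skew_sqr_entry_ge0 C_skew.
have := mxtrace_trmx_mul_ge0 (W i0 i0 *: W - W *m E *m W).
rewrite lorentz_defectT ?lorentz_skew_sqrT // mxtrace_defect_sqr // => G_ge0.
have W2_0 : (W *m W) i0 i0 = 0.
  by apply/eqP; rewrite -sqrf_eq0 eq_le sqr_ge0 andbT; nra.
split=> //; apply/eqP; rewrite -subr_eq0; apply/eqP/mxtrace_trmx_mul_eq0.
rewrite lorentz_defectT ?lorentz_skew_sqrT // mxtrace_defect_sqr // W2_0; nra.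
Qed.

End LorentzSquare.

Section LorentzHeisenberg.
Variables A B : 'M[R]_n.
Local Notation C := (lie A B).

Lemma lorentz_lie_sqr_entry : lorentz_skew A -> lorentz_skew B ->
  comm_mx A C -> comm_mx B C -> (C *m C) i0 i0 = 2 * minkowski A (C *m B).
Proof.
move=> A_skew B_skew; have := lorentz_skew_lie A_skew B_skew.
set C := lie A B => C_skew AC BC.
have CBA : (C *m B *m A) i0 i0 = - (A *m C *m B) i0 i0.
  have : (C *m B *m A)^T i0 i0 = (C *m B *m A) i0 i0 by rewrite mxE.
  rewrite !trmx_mul A_skew B_skew C_skew !mulNmx !mulmxN !opprK !lorentz_conj_mul.
  by rewrite [(- _ : 'M_n) _ _]mxE lorentz_conj_entry BC !mulmxA; lra.
rewrite minkowski_skewl // mulmxA {2}/C mulmxBr !mulmxA -AC.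
by rewrite [(_ - _ : 'M_n) _ _]mxE [(- _ : 'M_n) _ _]mxE CBA; lra.
Qed.

Lemma lorentz_lie_sqr_entry_eq0 : lorentz_skew A -> lorentz_skew B ->
  comm_mx A C -> comm_mx B C -> (C *m C *m (C *m C)) i0 i0 = 0 ->
  (C *m C) i0 i0 *: (C *m C) = C *m C *m E *m (C *m C) -> (C *m C) i0 i0 = 0.
Proof.
move=> A_skew B_skew AC BC; have sqr_entry := lorentz_lie_sqr_entry A_skew B_skew AC BC.
have := lorentz_skew_lie A_skew B_skew.
move: sqr_entry AC BC; set C := lie A B; set W := C *m C => sqr_entry AC BC C_skew W2_0 rank1.
apply/eqP; apply: contraT => W0.
have W_sym : W^T = J *m W *m J by exact: lorentz_skew_sqrT.
have AWE : A *m W *m E = 0 by apply: lorentz_comm_rank1 => //; exact: comm_mxM.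
have BWE : B *m W *m E = 0 by apply: lorentz_comm_rank1 => //; exact: comm_mxM.
have CWE : C *m W *m E = 0.
  have -> : C *m W *m E = A *m (B *m W *m E) - B *m (A *m W *m E).
    by rewrite /C !mulmxBl !mulmxA.
  by rewrite AWE BWE !mulmx0 subrr.
have entryE (X : 'M[R]_n) : X i0 i0 = (X *m E) i0 i0 by rewrite mulmx_deltaE eqxx mulr1.
have WW : minkowski W W = 0.
  rewrite /minkowski W_sym -(mulmxA _ J J) lorentz_mx_invol mulmx1 -mulmxA.
  by rewrite lorentz_mx_mul_entry W2_0 oppr0.
have AW : minkowski A W = 0 by rewrite minkowski_skewl // entryE AWE mxE.
have CBW : minkowski (C *m B) W = 0.
  by rewrite minkowski_skew_mull // minkowski_skewl // entryE -mulmxA CWE mulmx0 mxE oppr0.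
have BWB : (B *m W *m B) i0 i0 = 0.
  have : W i0 i0 *: (B *m W *m B) = B *m W *m E *m (W *m B).
    by rewrite scalemxAl scalemxAr rank1 !mulmxA.
  move/(congr1 (fun X : 'M[R]_n => X i0 i0)).
  rewrite [(_ *: _ : 'M_n) _ _]mxE mul_delta_mul_entry [(B *m W) i0 i0]entryE BWE.
  rewrite [(0 : 'M_n) _ _]mxE mul0r.
  by move/eqP; rewrite mulf_eq0 (negbTE W0) => /eqP.
have CBCB : minkowski (C *m B) (C *m B) = 0.
  by rewrite minkowski_skew_mull // minkowski_skewl // (mulmxA C C B) mulmxA -/W BWB oppr0.
by move: (W0); rewrite sqr_entry (minkowski_null_orth_eq0 W0 WW AW CBW CBCB) mulr0 eqxx.
Qed.

Lemma lorentz_heisenberg : lorentz_skew A -> lorentz_skew B ->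
  comm_mx A C -> comm_mx B C -> C = 0.
Proof.
move=> A_skew B_skew AC BC; have C_skew := lorentz_skew_lie A_skew B_skew.
have trW : \tr (C *m C) = 0 by apply: mxtrace_mul_lie; exact: comm_mx_sym.
have trW2 : \tr (C *m C *m (C *m C)) = 0.
  rewrite !mulmxA; apply: mxtrace_mul_lie; apply: comm_mx_sym.
  exact: comm_mxM (comm_mxM AC AC) AC.
have [W2_0 rank1] := lorentz_sqr_rank1 C_skew trW2.
exact: lorentz_skew_eq0 C_skew (lorentz_lie_sqr_entry_eq0 A_skew B_skew AC BC W2_0 rank1) trW.
Qed.

End LorentzHeisenberg.

End Lorentz.

Lemma minkJE (R : realType) k : minkJ R k = lorentz_mx (@ord0 k).
Proof.
apply/matrixP => i j; rewrite lorentz_mxE !mxE.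
have [<-|ij] := eqVneq i j; first by rewrite andbb; case: (i == ord0); rewrite /=; lra.
have -> : (i == ord0) && (j == ord0) = false.
  by apply/negbTE; apply: contra ij => /andP[/eqP -> /eqP ->].
by rewrite /= mulr0 subr0.
Qed.

Lemma isom_lie_heisenberg (R : realType) (g : geom) k (A B : 'M[R]_k.+1) :
  in_isom_lie g A -> in_isom_lie g B ->
  comm_mx A (lie A B) -> comm_mx B (lie A B) -> lie A B = 0.
Proof.
case: g => /= [A_skew B_skew|[B1 [v1 [B1_skew ->]]] [B2 [v2 [B2_skew ->]]]|A_form B_form] AC BC.
- exact: skew_lie_eq0.
- exact: affine_lie_eq0.
- rewrite minkJE in A_form B_form.
  by apply: (lorentz_heisenberg (i0 := ord0)) => //; apply: lorentz_skew_of_form.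
Qed.

Section NilpotentSubalgebra.
Variables (R : realType) (m : nat) (t : 'I_m -> geom) (k : 'I_m -> nat).

Lemma pbr_heisenberg (x y : pelt R k) : in_g t x -> in_g t y ->
  is_pzero (pbr x (pbr x y)) -> is_pzero (pbr y (pbr x y)) -> is_pzero (pbr x y).
Proof.
move=> gx gy xz yz i; apply: isom_lie_heisenberg (gx i) (gy i) _ _; apply: subr0_eq.
- exact: xz i.
- exact: yz i.
Qed.

Variable S : pelt R k -> Prop.
Hypothesis S_sub : is_subalgebra t S.

Lemma lcs_subset j x : lcs S j x -> S x.
Proof.
have [_ S0 SD SZ Sbr] := S_sub.
elim: j x => [//|j IH] z /=; elim=> [_ [x [y [Sx [Ly ->]]]]| | x y _ Sx _ Sy | a x _ Sx].
- exact: Sbr Sx (IH _ Ly).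
- exact: S0.
- exact: SD.
- exact: SZ.
Qed.

Lemma lcs_center_step j :
  (forall x y, S x -> lcs S j.+1 y -> is_pzero (pbr x y)) ->
  forall x y, S x -> lcs S j y -> is_pzero (pbr x y).
Proof.
move=> central x y Sx Ly; have [Sg _ _ _ _] := S_sub; have Sy := lcs_subset Ly.
have Lxy : lcs S j.+1 (pbr x y) by apply: span_gen; exists x, y.
exact: pbr_heisenberg (Sg _ Sx) (Sg _ Sy) (central _ _ Sx Lxy) (central _ _ Sy Lxy).
Qed.

End NilpotentSubalgebra.

Theorem lemma6p31 (R : realType) (m : nat) (t : 'I_m -> geom) (k : 'I_m -> nat)
  (S : pelt R k -> Prop) :
  is_subalgebra t S -> nilpotent S -> abelian S.
Proof.
move=> S_sub [N lcsN0].
have central d j : (d + j)%N = N -> forall x y, S x -> lcs S j y -> is_pzero (pbr x y).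
  elim: d j => [|d IH] j.
    move=> jN x y _ Ly i; subst N.
    by rewrite /pbr (lcsN0 y Ly i) mulmx0 mul0mx subrr.
  by move=> dj; apply: (lcs_center_step S_sub); apply: IH; rewrite addnS -addSn.
move=> x y Sx Sy; exact: central N 0 (addn0 N) x y Sx Sy.
Qed.
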